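(* Let $G$ be a connected graph on vertex set $[n]$ and $\pi$ a permutation of $[n]$ with $rt(G,\pi)>1$. Then $rt(G,\pi)=2$ if and only if the graph $G_{cycle(\pi)}$ has a perfect matching, where a perfect matching is allowed to cover a vertex by a self-loop at that vertex.
   Context: Routing via matchings: each vertex $i$ of $G$ initially holds a pebble which must be moved to vertex $\pi(i)$. A step consists of choosing a matching of $G$ and swapping the pebbles at the endpoints of every matched edge. $rt(G,\pi)$ is the minimum number of steps needed to route all pebbles to their destinations. A cycle of $\pi$ is identified with its vertex set. A cycle $C$ is individually routable (in 2 steps) if its pebbles can be routed to their destinations in at most 2 steps using only edges of the induced subgraph $G[C]$. Two cycles $C_1,C_2$ are mutually routable in 2 steps if the pebbles on $C_1\cup C_2$ can be routed to their destinations in at most 2 steps using only edges of $G$ with one endpoint in $C_1$ and the other in $C_2$. $G_{cycle(\pi)}$ is the graph whose vertices are the cycles of $\pi$, in which two distinct cycles are adjacent iff they are mutually routable in 2 steps, and which has a self-loop at each cycle that is individually routable. *)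

From mathcomp Require Import all_boot all_fingroup.
From Stdlib Require Import ClassicalEpsilon.
Set Implicit Arguments. Unset Strict Implicit. Unset Printing Implicit Defensive.

(* A routing step: choosing a matching whose edges lie in the edge relation E
   and swapping the pebbles at the endpoints of every matched edge.  The effect
   of the step is the involution s : {perm 'I_n} exchanging the two endpoints
   of each matched edge and fixing unmatched vertices; conversely every such
   involution whose moved points are joined by E-edges comes from a matching. *)
Definition matching_step (n : nat) (E : rel 'I_n) (s : {perm 'I_n}) : Prop :=
  forall v : 'I_n, s (s v) = v /\ (s v != v -> E v (s v)).

(* Position reached by the pebble starting at v after performing the steps
   of ss in order (head of the list first). *)
Definition route (n : nat) (ss : seq {perm 'I_n}) (v : 'I_n) : 'I_n :=
  foldl (fun w (s : {perm 'I_n}) => s w) v ss.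

Definition routable_in (n : nat) (G : rel 'I_n) (pi : {perm 'I_n}) (k : nat) : Prop :=
  exists ss : seq {perm 'I_n},
    size ss = k /\ (forall s, s \in ss -> matching_step G s) /\
    (forall v, route ss v = pi v).

Definition routable_inb n (G : rel 'I_n) (pi : {perm 'I_n}) (k : nat) : bool :=
  if excluded_middle_informative (routable_in G pi k) then true else false.

(* rt(G, pi): the minimum number of steps (0 if pi is not routable at all,
   which never happens for connected G). *)
Definition rt (n : nat) (G : rel 'I_n) (pi : {perm 'I_n}) : nat :=
  match excluded_middle_informative (exists k, routable_inb G pi k) with
  | left H => ex_minn H
  | right _ => 0
  end.

Definition simple_graph n (G : rel 'I_n) : Prop := symmetric G /\ irreflexive G.
Definition connected_graph n (G : rel 'I_n) : Prop := forall u v, connect G u v.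

Definition induced_rel n (G : rel 'I_n) (C : {set 'I_n}) : rel 'I_n :=
  fun u v => [&& G u v, u \in C & v \in C].
Definition between_rel n (G : rel 'I_n) (C1 C2 : {set 'I_n}) : rel 'I_n :=
  fun u v => G u v && (((u \in C1) && (v \in C2)) || ((u \in C2) && (v \in C1))).

Definition routable2_on n (E : rel 'I_n) (pi : {perm 'I_n}) (D : {set 'I_n}) : Prop :=
  exists ss : seq {perm 'I_n},
    size ss <= 2 /\ (forall s, s \in ss -> matching_step E s) /\
    (forall v, v \in D -> route ss v = pi v).

Definition indiv_routable n (G : rel 'I_n) (pi : {perm 'I_n}) (C : {set 'I_n}) : Prop :=
  routable2_on (induced_rel G C) pi C.

Definition mutual_routable n (G : rel 'I_n) (pi : {perm 'I_n}) (C1 C2 : {set 'I_n}) : Prop :=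
  routable2_on (between_rel G C1 C2) pi (C1 :|: C2).

(* The graph G_cycle(pi): vertices are the cycles of pi (porbits pi);
   adjacency of C1, C2 (self-loop when C1 = C2). *)
Definition gcycle_adj n (G : rel 'I_n) (pi : {perm 'I_n}) (C1 C2 : {set 'I_n}) : Prop :=
  if C1 == C2 then indiv_routable G pi C1 else mutual_routable G pi C1 C2.

(* A perfect matching of G_cycle(pi) in which a vertex may be covered by its
   self-loop: a set M of edges ({C1, C2} with C1 <> C2, or loops {C}) of
   G_cycle(pi) such that every cycle lies in exactly one edge of M. *)
Definition gcycle_has_perfect_matching n (G : rel 'I_n) (pi : {perm 'I_n}) : Prop :=
  exists M : {set {set {set 'I_n}}},
    (forall e, e \in M -> exists C1 C2,
        [/\ C1 \in porbits pi, C2 \in porbits pi, e = [set C1; C2] & gcycle_adj G pi C1 C2]) /\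
    (forall C, C \in porbits pi -> exists! e, e \in M /\ C \in e).

From mathcomp Require Import all_boot all_fingroup.
From Stdlib Require Import ClassicalEpsilon.
Set Implicit Arguments. Unset Strict Implicit. Unset Printing Implicit Defensive.

(* If pi is routed by the matchings a then b, then pi = a * b with a, b
   involutions, so conjugation by a inverts pi and a maps each cycle C of pi
   onto a cycle a(C).  Pairing C with a(C) (a self-loop when a(C) = C) gives a
   perfect matching of G_cycle(pi): the restrictions of a and b to C :|: a(C)
   route that pair along edges inside C, or between C and a(C).  Conversely,
   the routings of the matched pairs only use edges inside their pair, and the
   pairs partition the vertices, so gluing all first matchings and all second
   matchings gives a two-step routing of pi. *)

Lemma routable_inbP n (G : rel 'I_n) pi k : routable_inb G pi k <-> routable_in G pi k.
Proof. by rewrite /routable_inb; case: excluded_middle_informative. Qed.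

Lemma rt_eq2P n (G : rel 'I_n) pi : 1 < rt G pi -> rt G pi = 2 <-> routable_in G pi 2.
Proof.
rewrite /rt; case: excluded_middle_informative => [ex | //].
case: ex_minnP => m /routable_inbP m_ok m_min lt1m; split=> [<- // | ok2].
by apply/eqP; rewrite eqn_leq lt1m andbT m_min //; apply/routable_inbP.
Qed.

Lemma porbitJ (T : finType) (s t : {perm T}) x : porbit (s ^ t)%g (t x) = t @: porbit s x.
Proof.
apply/setP=> y; apply/porbitP/imsetP => [[i ->] | [z /porbitP[i ->] ->]].
  by exists ((s ^+ i)%g x); rewrite ?mem_porbit // -conjXg permJ.
by exists i; rewrite -conjXg permJ.
Qed.

Lemma porbit_memS (T : finType) (s : {perm T}) x y :
  (s x \in porbit s y) = (x \in porbit s y).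
Proof. by rewrite -!eq_porbit_mem; have := porbit_perm s 1 x; rewrite expg1 => ->. Qed.

Lemma porbit_in_porbits (T : finType) (s : {perm T}) x : porbit s x \in porbits s.
Proof. exact: imset_f. Qed.

Lemma invg_involutive (T : finType) (s : {perm T}) : involutive s -> (s^-1)%g = s.
Proof. by move=> sK; apply/permP=> x; rewrite -{1}(sK x) permK. Qed.

Lemma conjg_mul_invol (gT : finGroupType) (a b : gT) :
  (a^-1 = a -> b^-1 = b -> (a * b) ^ a = (a * b)^-1)%g.
Proof. by move=> aV bV; rewrite conjgE mulgA mulKg invMg aV bV. Qed.

Section Matchings.
Local Open Scope group_scope.
Variable n : nat.
Implicit Types (G E : rel 'I_n) (s pi : {perm 'I_n}) (D : {set 'I_n}).

Definition matching_at E (s : {perm 'I_n}) v := s (s v) = v /\ (s v != v -> E v (s v)).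

Lemma matching_stepK E s : matching_step E s -> involutive s.
Proof. by move=> Ms v; case: (Ms v). Qed.

Lemma matching_step1 E : matching_step E 1.
Proof. by move=> v; rewrite !perm1 eqxx. Qed.

Lemma matching_step_sub E E' s : subrel E E' -> matching_step E s -> matching_step E' s.
Proof. by move=> EE' Ms v; have [? Ev] := Ms v; split=> // /Ev/EE'. Qed.

Lemma matching_step_stable E s D : (forall u v, E u v -> v \in D) ->
  matching_step E s -> {in D, forall v, s v \in D}.
Proof. by move=> ED Ms v vD; case: eqVneq (proj2 (Ms v)) => [-> | _ /(_ isT)/ED]. Qed.

Lemma glue_matching_step (K : Type) (key : 'I_n -> K) (s : K -> {perm 'I_n}) E :
  (forall v, key (s (key v) v) = key v) -> (forall v, matching_at E (s (key v)) v) ->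
  exists2 p, matching_step E p & forall v, p v = s (key v) v.
Proof.
move=> key_s Ms; pose f v := s (key v) v.
have fK : involutive f by move=> v; rewrite /f key_s; case: (Ms v).
exists (perm (can_inj fK)) => v; rewrite !permE //; split; first exact: fK.
by case: (Ms v).
Qed.

Lemma restrict_matching_step E s D : involutive s -> {in D, forall v, s v \in D} ->
  {in D, forall v, s v != v -> E v (s v)} -> exists2 r, matching_step E r & {in D, r =1 s}.
Proof.
move=> sK sD sE; pose t (b : bool) := if b then s else 1.
have t_key v : (t (v \in D) v \in D) = (v \in D).
  by rewrite /t; case: (boolP (v \in D)) => vD; rewrite ?perm1 ?sD ?(negbTE vD).
have t_match v : matching_at E (t (v \in D)) v.
  rewrite /t /matching_at; case: (boolP (v \in D)) => [vD | _]; last by rewrite !perm1 eqxx.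
  by split; [apply: sK | apply: sE].
have [r Mr rE] := glue_matching_step t_key t_match.
by exists r => // v vD; rewrite rE /t vD.
Qed.

Lemma routable2_onP E pi D : routable2_on E pi D <->
  exists a b, [/\ matching_step E a, matching_step E b & {in D, forall w, b (a w) = pi w}].
Proof.
split=> [[ss [ss_le2 [Mss ss_pi]]] | [a [b [Ma Mb ab_pi]]]]; last first.
  by exists [:: a; b]; split=> //; split=> // s; rewrite !inE => /orP[]/eqP->.
have Mnth i : matching_step E (nth 1 ss i).
  case: (ltnP i (size ss)) => [lt_i | le_i]; first exact/Mss/mem_nth.
  by rewrite nth_default //; apply: matching_step1.
exists (nth 1 ss 0), (nth 1 ss 1); split=> // w /ss_pi <-; rewrite /route.
by case: ss ss_le2 {Mss ss_pi Mnth} => [|x [|y [|? ?]]] //= _; rewrite ?perm1.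
Qed.

Lemma routable_in2P G pi : routable_in G pi 2 <->
  exists a b, [/\ matching_step G a, matching_step G b & pi = a * b].
Proof.
split=> [[ss [size2 [Mss ss_pi]]] | [a [b [Ma Mb ->]]]].
  case: ss size2 Mss ss_pi => [|a [|b [|? ?]]] //= _ Mss ss_pi.
  exists a, b; split; try by apply: Mss; rewrite !inE eqxx ?orbT.
  by apply/permP=> v; rewrite permM -ss_pi.
exists [:: a; b]; split=> //; split=> [s | v]; last by rewrite permM.
by rewrite !inE => /orP[]/eqP->.
Qed.

End Matchings.

Section CycleGraph.
Variables (n : nat) (G : rel 'I_n) (pi : {perm 'I_n}).
Implicit Types (s : {perm 'I_n}).

Definition gcycle_rel (C1 C2 : {set 'I_n}) : rel 'I_n :=
  if C1 == C2 then induced_rel G C1 else between_rel G C1 C2.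

Lemma gcycle_adjE (C1 C2 : {set 'I_n}) :
  gcycle_adj G pi C1 C2 <-> routable2_on (gcycle_rel C1 C2) pi (C1 :|: C2).
Proof. by rewrite /gcycle_adj /gcycle_rel; case: eqP => [<- | _]; rewrite ?setUid. Qed.

Lemma gcycle_relW (C1 C2 : {set 'I_n}) u v :
  gcycle_rel C1 C2 u v -> G u v /\ v \in C1 :|: C2.
Proof.
rewrite /gcycle_rel; case: eqP => [<- /and3P[-> _ vC] | _ /andP[-> /orP[]/andP[_ vC]]];
  by rewrite inE vC ?orbT.
Qed.

Lemma gcycle_rel_swap (C1 C2 : {set 'I_n}) u v : G u v -> u \in C1 :|: C2 ->
  (u \in C1 -> v \in C2) -> (u \in C2 -> v \in C1) -> gcycle_rel C1 C2 u v.
Proof.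
move=> Guv; rewrite /gcycle_rel /induced_rel /between_rel inE.
case: eqP => [<- | _] /=; rewrite Guv.
  by rewrite orbb => uC /(_ uC) ->; rewrite uC.
by case/orP=> uC vC1 vC2; [rewrite uC vC1 | rewrite uC vC2 ?orbT].
Qed.

Lemma gcycle_restrict (C1 C2 : {set 'I_n}) s : matching_step G s ->
  {in C1, forall w, s w \in C2} -> {in C2, forall w, s w \in C1} ->
  exists2 r, matching_step (gcycle_rel C1 C2) r & {in C1 :|: C2, r =1 s}.
Proof.
move=> Ms s12 s21; apply: restrict_matching_step (matching_stepK Ms) _ _.
  by move=> w; rewrite !inE => /orP[/s12 | /s21] ->; rewrite ?orbT.
move=> w wC /(proj2 (Ms w)) Gw; apply: gcycle_rel_swap => //; [exact: s12 | exact: s21].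
Qed.

Lemma gcycle_adj_routing (C1 C2 : {set 'I_n}) : gcycle_adj G pi C1 C2 ->
  exists a b, [/\ matching_step G a, matching_step G b,
    {in C1 :|: C2, forall w, a w \in C1 :|: C2}, {in C1 :|: C2, forall w, b w \in C1 :|: C2}
    & {in C1 :|: C2, forall w, b (a w) = pi w}].
Proof.
rewrite gcycle_adjE routable2_onP => -[a [b [Ma Mb ab_pi]]].
have relG : subrel (gcycle_rel C1 C2) G by move=> u v /gcycle_relW[].
have relD u v : gcycle_rel C1 C2 u v -> v \in C1 :|: C2 by case/gcycle_relW.
by exists a, b; split; do ?[exact: matching_step_sub Ma | exact: matching_step_sub Mb
  | exact: matching_step_stable Ma | exact: matching_step_stable Mb].
Qed.

End CycleGraph.

Section TwoStepRoutingToMatching.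
Local Open Scope group_scope.
Variables (n : nat) (G : rel 'I_n) (a b : {perm 'I_n}).
Hypotheses (Ma : matching_step G a) (Mb : matching_step G b).
Local Notation pi := (a * b).
Local Notation O := (porbit pi).

Let aK : involutive a := matching_stepK Ma.

Lemma porbit_mirror x : a @: O x = O (a x).
Proof.
have bK : involutive b := matching_stepK Mb.
by rewrite -porbitJ conjg_mul_invol ?porbitV ?invg_involutive.
Qed.

Lemma mirror_porbit_a x : {in O x, forall w, a w \in O (a x)}.
Proof. by move=> w wx; rewrite -porbit_mirror imset_f. Qed.

Lemma mirror_porbit_b x : {in O x, forall w, b w \in O (a x)}.
Proof. by move=> w /mirror_porbit_a; rewrite -porbit_memS permM aK. Qed.

Lemma porbit_mirror_eq x y : O x = O y -> O (a x) = O (a y).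
Proof. by rewrite -!porbit_mirror => ->. Qed.

Lemma gcycle_adj_mirror x : gcycle_adj G pi (O x) (O (a x)).
Proof.
have back_a : {in O (a x), forall w, a w \in O x}.
  by move=> w /mirror_porbit_a; rewrite aK.
have back_b : {in O (a x), forall w, b w \in O x}.
  by move=> w /mirror_porbit_b; rewrite aK.
have [ra Mra ra_a] := gcycle_restrict Ma (@mirror_porbit_a x) back_a.
have [rb Mrb rb_b] := gcycle_restrict Mb (@mirror_porbit_b x) back_b.
rewrite gcycle_adjE routable2_onP; exists ra, rb; split=> // w wD.
rewrite ra_a // rb_b ?permM //; move: wD; rewrite !inE.
by case/orP=> [/mirror_porbit_a | /back_a] ->; rewrite ?orbT.
Qed.

Lemma routing_gcycle_matching : gcycle_has_perfect_matching G pi.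
Proof.
exists [set [set O x; O (a x)] | x : 'I_n]; split.
  move=> _ /imsetP[x _ ->]; exists (O x), (O (a x)).
  by split; rewrite ?porbit_in_porbits //; apply: gcycle_adj_mirror.
move=> _ /imsetP[v _ ->]; exists [set O v; O (a v)]; split.
  by rewrite set21; split=> //; apply/imsetP; exists v.
move=> _ [/imsetP[u _ ->]]; rewrite !inE => /orP[]/eqP vu.
  by rewrite vu (porbit_mirror_eq vu).
by rewrite vu (porbit_mirror_eq vu) aK setUC.
Qed.

End TwoStepRoutingToMatching.

Lemma mem_porbit_pair (T : finType) (s : {perm T}) (C1 C2 : {set T}) w :
  C1 \in porbits s -> C2 \in porbits s ->
  (porbit s w \in [set C1; C2]) = (w \in C1 :|: C2).
Proof. by move=> /imsetP[x1 _ ->] /imsetP[x2 _ ->]; rewrite !inE !eq_porbit_mem. Qed.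

Section MatchingToTwoStepRouting.
Local Open Scope group_scope.
Variables (n : nat) (G : rel 'I_n) (pi : {perm 'I_n}) (M : {set {set {set 'I_n}}}).
Hypothesis M_edges : forall e, e \in M -> exists C1 C2,
  [/\ C1 \in porbits pi, C2 \in porbits pi, e = [set C1; C2] & gcycle_adj G pi C1 C2].
Hypothesis M_cover : forall C, C \in porbits pi -> exists! e, e \in M /\ C \in e.
Local Notation O := (porbit pi).

Definition routes_block (e : {set {set 'I_n}}) (ab : {perm 'I_n} * {perm 'I_n}) :=
  [/\ matching_step G ab.1, matching_step G ab.2
    & forall w, O w \in e -> [/\ O (ab.1 w) \in e, O (ab.2 w) \in e & ab.2 (ab.1 w) = pi w]].

Lemma edge_routes_block e : e \in M -> exists ab, routes_block e ab.
Proof.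
case/M_edges=> C1 [C2 [C1_orb C2_orb -> /gcycle_adj_routing[a [b [Ma Mb aD bD ab_pi]]]]].
exists (a, b); split=> // w; rewrite !mem_porbit_pair // => wD.
by split; [apply: aD | apply: bD | apply: ab_pi].
Qed.

Definition edge_of v := odflt set0 [pick e in M | O v \in e].

Lemma edge_ofP v : edge_of v \in M /\ O v \in edge_of v.
Proof.
have [e [[eM ve] _]] := M_cover (porbit_in_porbits pi v).
rewrite /edge_of; case: pickP => [e' /andP[] // | none].
by have := none e; rewrite eM ve.
Qed.

Lemma edge_of_eq v w : O w \in edge_of v -> edge_of w = edge_of v.
Proof.
move=> w_v; have [e [_ e_uniq]] := M_cover (porbit_in_porbits pi w).
by rewrite -(e_uniq _ (edge_ofP w)) (e_uniq _ (conj (proj1 (edge_ofP v)) w_v)).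
Qed.

Lemma gcycle_matching_routing : routable_in G pi 2.
Proof.
have [F F_block] : exists F, forall e, e \in M -> routes_block e (F e).
  by apply: (choice (fun e ab => e \in M -> routes_block e ab)) => e;
  case: (boolP (e \in M)) => [/edge_routes_block[ab] | eM]; [exists ab | exists (1, 1)].
have F_at v := F_block _ (proj1 (edge_ofP v)).
have v_at v := proj2 (edge_ofP v).
have [pa Mpa paE] : exists2 p, matching_step G p & forall v, p v = (F (edge_of v)).1 v.
  apply: (glue_matching_step (key := edge_of) (s := fun e => (F e).1)) => v.
    by apply: edge_of_eq; case: (F_at v) => _ _ /(_ v (v_at v))[].
  by case: (F_at v) => /(_ v).
have [pb Mpb pbE] : exists2 p, matching_step G p & forall v, p v = (F (edge_of v)).2 v.
  apply: (glue_matching_step (key := edge_of) (s := fun e => (F e).2)) => v.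
    by apply: edge_of_eq; case: (F_at v) => _ _ /(_ v (v_at v))[].
  by case: (F_at v) => _ /(_ v).
apply/routable_in2P; exists pa, pb; split=> //; apply/permP=> v.
have [_ _ /(_ v (v_at v))[pa_v _ <-]] := F_at v.
by rewrite permM pbE paE (edge_of_eq pa_v).
Qed.

End MatchingToTwoStepRouting.

Theorem lemma2 (n : nat) (G : rel 'I_n) (pi : {perm 'I_n}) :
  simple_graph G -> connected_graph G -> 1 < rt G pi ->
  (rt G pi = 2 <-> gcycle_has_perfect_matching G pi).
Proof.
move=> _ _ /rt_eq2P ->; split=> [/routable_in2P[a [b [Ma Mb ->]]] | [M [M_edges M_cover]]].
  exact: routing_gcycle_matching.
exact: gcycle_matching_routing M_edges M_cover.
Qed.
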